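(* Let $p\ge 1$, let $n_1,\dots,n_p\ge1$ and $k_s\in[n_s]$ for each $s$. If $\mathcal{F}\subseteq\prod_{s}\binom{[n_s]}{k_s}$ is intersecting and shifted, then $P(F)\cap P(G)\neq\emptyset$ for any $F,G\in \mathcal{F}$.
   Context: Multi-part setting: the ground set is the disjoint union $\bigsqcup_{s=1}^p [n_s]$ of $p$ parts, $[n]=\{1,\dots,n\}$. For $F_s\subseteq[n_s]$, $\bigsqcup_s F_s$ denotes the subset having $F_s$ in part $s$; $\prod_{s}\binom{[n_s]}{k_s}$ is the collection of all $\bigsqcup_s F_s$ with $|F_s|=k_s$ for all $s$. A family is intersecting if any two of its sets intersect (in some part). Shifting: for $t\in[p]$, $1\le i<j\le n_t$ and $F=\bigsqcup_s F_s$, $S_t^{i,j}(F)=F$ if $i\in F_t$ or $j\notin F_t$, and otherwise $S_t^{i,j}(F)$ replaces $F_t$ by $(F_t\setminus\{j\})\cup\{i\}$. For a family, $S_t^{i,j}(\mathcal F)=\{S_t^{i,j}(F):F\in\mathcal F\}\cup\{F: F\in\mathcal F,\ S_t^{i,j}(F)\in\mathcal F\}$. $\mathcal F$ is shifted if $S_t^{i,j}(\mathcal F)=\mathcal F$ for all $t\in[p]$ and all $1\le i<j\le n_t$. Projection: for $F=\bigsqcup_s F_s$, let $P_s(F)=F_s\cap[2k_s]$ and $P(F)=\bigsqcup_s P_s(F)$ (the first $2k_s$ elements of each part $s$ that lie in $F$). *)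

From mathcomp Require Import all_boot.
Set Implicit Arguments. Unset Strict Implicit. Unset Printing Implicit Defensive.

(* Ground set: disjoint union of p parts; part s is [n_s] = {1..n_s},
   represented 0-indexed by 'I_(n s): the ordinal x stands for x+1. *)
Definition elt (p : nat) (n : 'I_p -> nat) : finType :=
  {s : 'I_p & 'I_(n s)}.

Definition mk (p : nat) (n : 'I_p -> nat) (s : 'I_p) (x : 'I_(n s)) : elt n :=
  @Tagged 'I_p s (fun s => 'I_(n s)) x.

Definition part (p : nat) (n : 'I_p -> nat) (F : {set elt n}) (s : 'I_p)
  : {set 'I_(n s)} := [set x : 'I_(n s) | mk x \in F].

Definition in_prod (p : nat) (n k : 'I_p -> nat) (F : {set elt n}) : bool :=
  [forall s : 'I_p, #|part F s| == k s].

Definition intersecting (p : nat) (n : 'I_p -> nat) (Fam : {set {set elt n}}) :=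
  forall F G, F \in Fam -> G \in Fam -> F :&: G != set0.

Definition shift1 (p : nat) (n : 'I_p -> nat) (t : 'I_p) (i j : 'I_(n t))
  (F : {set elt n}) : {set elt n} :=
  if (i \in part F t) || (j \notin part F t) then F
  else (F :\ mk j) :|: [set mk i].

Definition shiftFam (p : nat) (n : 'I_p -> nat) (t : 'I_p) (i j : 'I_(n t))
  (Fam : {set {set elt n}}) : {set {set elt n}} :=
  [set shift1 i j F | F in Fam] :|: [set F in Fam | shift1 i j F \in Fam].

Definition shifted (p : nat) (n : 'I_p -> nat) (Fam : {set {set elt n}}) :=
  forall (t : 'I_p) (i j : 'I_(n t)), (i < j)%N -> shiftFam i j Fam = Fam.

(* P(F): keep in part s only the first 2 k_s elements, i.e. values
   1..2k_s, i.e. 0-indexed ordinals < 2 k_s. *)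
Definition proj (p : nat) (n k : 'I_p -> nat) (F : {set elt n}) : {set elt n} :=
  [set x in F | (val (tagged x) < 2 * k (tag x))%N].

From mathcomp Require Import all_boot.

Set Implicit Arguments.
Unset Strict Implicit.
Unset Printing Implicit Defensive.

(* Induction on |F ∩ G|.  If P(F) and P(G) were disjoint, pick x in F ∩ G,
   say in part s; then x is not among the first 2k_s elements of part s, so
   F and G each have fewer than k_s elements there, and some y < 2k_s of
   part s lies in neither.  Shifting x to y in G stays in the family (it is
   shifted), keeps P(F) ∩ P(G) empty (y ∉ F), and removes x from F ∩ G. *)

Lemma card_ord_lt (N m : nat) : m <= N -> #|[set z : 'I_N | z < m]| = m.
Proof.
move=> le_mN.
have -> : [set z : 'I_N | z < m] = widen_ord le_mN @: [set: 'I_m].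
  apply/setP => z; rewrite !inE; apply/idP/imsetP => [lt_zm | [w _ ->]].
    by exists (Ordinal lt_zm); [rewrite inE | apply: val_inj].
  by rewrite /= ltn_ord.
rewrite card_imset ?cardsT ?card_ord // => a b /(congr1 val) ab.
exact: val_inj.
Qed.

Lemma card_setI_lt (T : finType) (A L : {set T}) (x : T) :
  x \in A -> x \notin L -> #|A :&: L| < #|A|.
Proof.
move=> xA xNL; apply/proper_card/properIl.
by apply/subsetPn; exists x.
Qed.

Lemma exists_outside_setU (T : finType) (A B L : {set T}) :
  #|A :&: L| + #|B :&: L| < #|L| -> exists2 y, y \in L & y \notin A :|: B.
Proof.
move=> small; apply/subsetPn; apply: contraTN small => sub_L; rewrite -leqNgt.
apply: leq_trans (leq_card_setU _ _); apply: subset_leq_card.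
by rewrite -setIUl subsetI sub_L subxx.
Qed.

Lemma setI_swap (T : finType) (F G : {set T}) (x y : T) :
  y \notin F -> F :&: (G :\ x :|: [set y]) = (F :&: G) :\ x.
Proof.
move=> yNF; apply/setP => z; rewrite !inE.
by case: (eqVneq z y) => [-> | _]; rewrite ?(negbTE yNF) ?andbF ?orbF // andbCA.
Qed.

Section ShiftedFamily.

Variables (p : nat) (n k : 'I_p -> nat) (Fam : {set {set elt n}}).
Hypothesis Fam_prod : forall F, F \in Fam -> in_prod k F.
Hypothesis Fam_intersecting : intersecting Fam.
Hypothesis Fam_shifted : shifted Fam.

Lemma projI (F G : {set elt n}) : proj k F :&: proj k G = proj k (F :&: G).
Proof. by apply/setP => z; rewrite !inE andbACA andbb. Qed.

Lemma projS (F G : {set elt n}) : F \subset G -> proj k F \subset proj k G.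
Proof.
move=> /subsetP FG; apply/subsetP => z; rewrite !inE => /andP[zF ->].
by rewrite FG.
Qed.

Lemma shift1_swap (t : 'I_p) (i j : 'I_(n t)) (G : {set elt n}) :
  mk i \notin G -> mk j \in G -> shift1 i j G = G :\ mk j :|: [set mk i].
Proof. by move=> iNG jG; rewrite /shift1 !inE (negbTE iNG) jG. Qed.

Lemma shift1_in_Fam (t : 'I_p) (i j : 'I_(n t)) (G : {set elt n}) :
  i < j -> G \in Fam -> shift1 i j G \in Fam.
Proof. by move=> lt_ij GFam; rewrite -(Fam_shifted lt_ij) !inE imset_f. Qed.

Lemma card_part_low_lt (F : {set elt n}) (s : 'I_p) (x : 'I_(n s)) :
  F \in Fam -> mk x \in F -> 2 * k s <= x ->
  #|part F s :&: [set z : 'I_(n s) | z < 2 * k s]| < k s.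
Proof.
move=> FFam xF le_x; have /forallP /(_ s) /eqP card_F := Fam_prod FFam.
rewrite -[X in _ < X]card_F; apply: (card_setI_lt (x := x)).
  by rewrite inE.
by rewrite inE -leqNgt.
Qed.

Lemma exists_low_free (F G : {set elt n}) (s : 'I_p) (x : 'I_(n s)) :
  F \in Fam -> G \in Fam -> mk x \in F -> mk x \in G -> 2 * k s <= x ->
  exists y : 'I_(n s), [/\ y < 2 * k s, mk y \notin F & mk y \notin G].
Proof.
move=> FFam GFam xF xG le_x.
have le_n : 2 * k s <= n s by apply: leq_trans le_x (ltnW (ltn_ord x)).
pose low := [set z : 'I_(n s) | z < 2 * k s].
have [|y] := @exists_outside_setU _ (part F s) (part G s) low.
  rewrite card_ord_lt // mul2n -addnn -addSn leq_add //.
    exact: card_part_low_lt FFam xF le_x.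
  exact/ltnW/(card_part_low_lt GFam xG le_x).
by rewrite !inE negb_or => lt_y /andP[yNF yNG]; exists y.
Qed.

Lemma proj_disjoint_shift (F G : {set elt n}) :
  F \in Fam -> G \in Fam -> proj k (F :&: G) = set0 ->
  exists2 G', G' \in Fam &
    proj k (F :&: G') = set0 /\ #|F :&: G'| < #|F :&: G|.
Proof.
move=> FFam GFam proj0.
have /set0Pn [[s x] FGx] := Fam_intersecting FFam GFam.
have {}FGx : mk x \in F :&: G := FGx; have /setIP [xF xG] := FGx.
have le_x : 2 * k s <= x.
  rewrite leqNgt; apply: contraFN (in_set0 (mk x)) => lt_x.
  by rewrite -proj0 inE FGx.
have [y [lt_y yNF yNG]] := exists_low_free FFam GFam xF xG le_x.
have lt_yx : y < x := leq_trans lt_y le_x.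
exists (shift1 y x G); first exact: shift1_in_Fam.
rewrite shift1_swap // setI_swap //; split.
  by apply/eqP; rewrite -subset0 -proj0 projS // subD1set.
by rewrite [#|F :&: G|](cardsD1 (mk x)) FGx.
Qed.

End ShiftedFamily.

Theorem lemma3p1 (p : nat) (n k : 'I_p -> nat) (Fam : {set {set elt n}}) :
  (1 <= p)%N ->
  (forall s, 1 <= n s)%N ->
  (forall s, 1 <= k s <= n s)%N ->
  (forall F, F \in Fam -> in_prod k F) ->
  intersecting Fam ->
  shifted Fam ->
  forall F G, F \in Fam -> G \in Fam -> proj k F :&: proj k G != set0.
Proof.
move=> _ _ _ Fam_prod Fam_int Fam_sh F G FFam.
have [m] := ubnP #|F :&: G|; elim: m G => // m IH G lt_FG GFam.
rewrite projI; apply/eqP => proj0.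
have [G' G'Fam [proj0' lt_G']] := proj_disjoint_shift Fam_prod Fam_int Fam_sh
  FFam GFam proj0.
by move: (IH G' (leq_trans lt_G' lt_FG) G'Fam); rewrite projI proj0' eqxx.
Qed.
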